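(* Let $x$ be a stable g-matching with $x\ne x^{\max}$, let $w\in W$, and let $(c,a)$ be a legal $w$-pair under $x$. Let $d\in (U_F^+(x)\cap E_w)\setminus\{a\}$ be interesting for $w$ under $z:=x_w+\mathbf 1^a-\mathbf 1^c$. Then $(c,d)$ is a legal $w$-pair under $x$ and $x_w+\mathbf 1^d-\mathbf 1^c\succ_w z$.
   Context: Let $G=(V,E)$ be a finite bipartite graph with color classes $W$ and $F$; the edge joining $w\in W$ and $f\in F$ is written $wf$. Let $b\in\mathbb Z_+^E$ be capacities. For $v\in V$, $E_v$ is the set of edges at $v$, $\mathcal B_v=\{z\in\mathbb Z_+^{E_v}: z\le b|_{E_v}\}$, $\mathbf 1^e$ the unit vector of $e$, $|z|=\sum_e|z(e)|$, $\wedge,\vee$ componentwise min/max. Each $v$ has a choice function $C_v:\mathcal B_v\to\mathcal B_v$ with $C_v(z)\le z$ and, for all $z,z'$: (A1) $z\ge z'\ge C_v(z)\Rightarrow C_v(z')=C_v(z)$; (A2) $z\ge z'\Rightarrow C_v(z)\wedge z'\le C_v(z')$; (A3) $z\ge z'\Rightarrow|C_v(z)|\ge|C_v(z')|$. $z$ is acceptable if $C_v(z)=z$; for distinct acceptable $z,z'$, $z'\prec_v z$ (i.e. $z\succ_v z'$) iff $C_v(z\vee z')=z$. $x_v$ = restriction of $x$ to $E_v$. A g-matching is $x\in\mathbb Z_+^E$, $x\le b$, each $x_v$ acceptable; $x\prec_F y$ (distinct) iff $x_f\preceq_f y_f$ for all $f\in F$. $e\in E_v$ is interesting for $v$ under acceptable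 $z$ if some $z'\in\mathcal B_v$ has $z'(e)>z(e)$, $z'(e')=z(e')$ for $e'\neq e$, $C_v(z')(e)>z(e)$; $e=wf$ is interesting for $v\in\{w,f\}$ under a g-matching $x$ if so under $x_v$, and blocks $x$ if interesting for both endpoints; stable g-matchings (no blocking edge) form a finite lattice under $\prec_F$ with maximum $x^{\max}$. For stable $x$: $U_F^+(x)$ = edges $wf$ interesting for $f$ under $x$; $U_F^-(x)$ = edges $wf$ with $x(wf)>0$ not interesting for $f$ under $x$. For $w\in W$, a legal $w$-pair under $x$ is $(c,a)$ with $c\in U_F^-(x)\cap E_w$, $a\in U_F^+(x)\cap E_w$ and $C_w(x_w+\mathbf 1^a-\mathbf 1^c)=x_w+\mathbf 1^a-\mathbf 1^c$. *)

From mathcomp Require Import all_boot.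
Set Implicit Arguments. Unset Strict Implicit. Unset Printing Implicit Defensive.

Section GMatch.
(* Bipartite graph: color classes W, F; edge set E; edge e joins ew e and ef e. *)
Variables (W F E : finType) (ew : E -> W) (ef : E -> F).
Variable b : E -> nat.

Definition vertex := (W + F)%type.
Definition vec := {ffun E -> nat}.

Definition incident (v : vertex) (e : E) : bool :=
  match v with inl w => ew e == w | inr f => ef e == f end.

Definition inB (v : vertex) (z : vec) : Prop :=
  forall e, z e <= b e /\ (~~ incident v e -> z e = 0).

Definition vle (z z' : vec) : Prop := forall e, z e <= z' e.
Definition vmin (z z' : vec) : vec := [ffun e => minn (z e) (z' e)].
Definition vmax (z z' : vec) : vec := [ffun e => maxn (z e) (z' e)].
Definition vsize (z : vec) : nat := \sum_(e : E) z e.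

Definition restr (v : vertex) (x : vec) : vec :=
  [ffun e => if incident v e then x e else 0].

Definition unitv (a : E) : vec := [ffun e => nat_of_bool (e == a)].

Definition swapv (z : vec) (a c : E) : vec :=
  [ffun e => z e + nat_of_bool (e == a) - nat_of_bool (e == c)].

Variable C : vertex -> vec -> vec.

Definition choice_fun (v : vertex) : Prop :=
  (forall z, inB v z -> vle (C v z) z) /\
  (forall z z', inB v z -> inB v z' ->
      vle z' z -> vle (C v z) z' -> C v z' = C v z) /\
  (forall z z', inB v z -> inB v z' ->
      vle z' z -> vle (vmin (C v z) z') (C v z')) /\
  (forall z z', inB v z -> inB v z' ->
      vle z' z -> vsize (C v z') <= vsize (C v z)).

Definition acceptable (v : vertex) (z : vec) : Prop := inB v z /\ C v z = z.

(* z' \prec_v z (z \succ_v z') for distinct acceptable z, z' *)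
Definition prec (v : vertex) (z' z : vec) : Prop :=
  acceptable v z /\ acceptable v z' /\ z <> z' /\ C v (vmax z z') = z.

Definition preceq (v : vertex) (z' z : vec) : Prop := z' = z \/ prec v z' z.

Definition gmatching (x : vec) : Prop :=
  (forall e, x e <= b e) /\ (forall v, acceptable v (restr v x)).

Definition interesting (v : vertex) (z : vec) (e : E) : Prop :=
  incident v e /\
  exists z' : vec, inB v z' /\ z e < z' e /\
    (forall e', e' != e -> z' e' = z e') /\ z e < C v z' e.

Definition interesting_x (v : vertex) (x : vec) (e : E) : Prop :=
  interesting v (restr v x) e.

Definition blocks (x : vec) (e : E) : Prop :=
  interesting_x (inl (ew e)) x e /\ interesting_x (inr (ef e)) x e.

Definition stable (x : vec) : Prop :=
  gmatching x /\ forall e, ~ blocks x e.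

Definition precF (x y : vec) : Prop :=
  x <> y /\ forall f : F, preceq (inr f) (restr (inr f) x) (restr (inr f) y).
Definition preceqF (x y : vec) : Prop := x = y \/ precF x y.

Definition is_xmax (xm : vec) : Prop :=
  stable xm /\ forall y, stable y -> preceqF y xm.

Definition UFplus (x : vec) (e : E) : Prop := interesting_x (inr (ef e)) x e.
Definition UFminus (x : vec) (e : E) : Prop :=
  0 < x e /\ ~ interesting_x (inr (ef e)) x e.

Definition legal_pair (x : vec) (w : W) (c a : E) : Prop :=
  UFminus x c /\ ew c = w /\ UFplus x a /\ ew a = w /\
  C (inl w) (swapv (restr (inl w) x) a c) = swapv (restr (inl w) x) a c.

End GMatch.

(* Write x_w = y + 1^c. As a and d lie in U_F^+(x) but do not block x, w rejects
   an extra copy of either, and substitutability plus consistency give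
   C_w(x_w + 1^a + 1^d) = x_w.  Substitutability, applied to this vector and to a
   witness that d is interesting under z = y + 1^a, shows that
   C_w(y + 1^a + 1^d) contains y + 1^d, and size monotonicity forbids it from being
   all of y + 1^a + 1^d.  Hence C_w(max(z, y + 1^d)) = y + 1^d, which is therefore
   acceptable and preferred to z. *)

From mathcomp Require Import all_boot zify.

Set Implicit Arguments.
Unset Strict Implicit.
Unset Printing Implicit Defensive.

Section Vectors.
Variable E : finType.

Definition incv (z : vec E) (e : E) : vec E := [ffun e' => z e' + (e' == e)].
Definition decv (z : vec E) (e : E) : vec E := [ffun e' => z e' - (e' == e)].

Lemma decvK (z : vec E) (c : E) : 0 < z c -> incv (decv z c) c = z.
Proof.
by move=> zc; apply/ffunP => e; rewrite !ffunE; case: eqVneq => [->|_] /=; lia.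
Qed.

Lemma swapv_decv (z : vec E) (a c : E) :
  0 < z c -> swapv z a c = incv (decv z c) a.
Proof.
move=> zc; apply/ffunP => e; rewrite !ffunE; move: zc.
by case: (eqVneq e c) => [->|_]; case: eqVneq => [->|_] /=; lia.
Qed.

Lemma vsize_incv (z : vec E) (e : E) : vsize (incv z e) = (vsize z).+1.
Proof.
rewrite /vsize (eq_bigr (fun i => z i + (i == e))) => [|i _]; last by rewrite ffunE.
rewrite big_split /= -addn1; congr (_ + _).
by rewrite (bigD1 e) //= eqxx big1 // => i /negbTE ->.
Qed.

Lemma between_incv (z y : vec E) (a : E) :
  vle z y -> vle y (incv z a) -> y = z \/ y = incv z a.
Proof.
move=> zy yz; have [ya | ya] := leqP (y a) (z a); [left | right];
  by apply/ffunP => e; move: (zy e) (yz e); rewrite ffunE; case: eqVneq => [->|_] /=; lia.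
Qed.

End Vectors.

Section Choice.
Variables (W F E : finType) (ew : E -> W) (ef : E -> F) (b : E -> nat).
Variables (C : vertex W F -> vec E -> vec E) (v : vertex W F).
Hypothesis HC : choice_fun ew ef b C v.

Local Notation incident := (incident ew ef v).
Local Notation inB := (inB ew ef b v).
Local Notation acceptable := (acceptable ew ef b C v).
Local Notation interesting := (interesting ew ef b C v).

Lemma choice_le z : inB z -> vle (C v z) z.
Proof. exact: HC.1. Qed.

Lemma choice_consistent z z' :
  inB z -> inB z' -> vle z' z -> vle (C v z) z' -> C v z' = C v z.
Proof. exact: HC.2.1. Qed.

Lemma choice_substitutable z z' :
  inB z -> inB z' -> vle z' z -> vle (vmin (C v z) z') (C v z').
Proof. exact: HC.2.2.1. Qed.

Lemma choice_size_mono z z' :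
  inB z -> inB z' -> vle z' z -> vsize (C v z') <= vsize (C v z).
Proof. exact: HC.2.2.2. Qed.

Lemma inB_le z z' : inB z -> vle z' z -> inB z'.
Proof.
move=> Bz le e; have [ze zout] := Bz e; split; first exact: leq_trans (le e) ze.
by move=> /zout z0; apply/eqP; rewrite -leqn0 -z0 le.
Qed.

Lemma inB_incv z e : inB z -> incident e -> z e < b e -> inB (incv z e).
Proof.
move=> Bz ve zb e'; have [ze' zout] := Bz e'; rewrite ffunE.
case: eqVneq => [->|_]; last by rewrite addn0.
by split=> [|/negP]; rewrite ?addn1.
Qed.

Lemma inB_incv2 z a d :
  inB z -> a != d -> incident a -> incident d -> z a < b a -> z d < b d ->
  inB (incv (incv z a) d).
Proof.
move=> Bz ad va vd za zd; apply: inB_incv; [exact: inB_incv | by [] |].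
by rewrite ffunE eq_sym (negbTE ad) addn0.
Qed.

Lemma choice_incv_uninteresting z e :
  acceptable z -> incident e -> z e < b e -> ~ interesting z e ->
  C v (incv z e) = z.
Proof.
move=> [Bz Cz] ve ze NI; have Bze := inB_incv Bz ve ze.
have le_z : vle z (incv z e) by move=> e'; rewrite ffunE leq_addr.
rewrite -[RHS]Cz; apply: esym; apply: choice_consistent => // e'.
case: (eqVneq e' e) => [-> | ne]; last first.
  by have := choice_le Bze e'; rewrite ffunE (negbTE ne) addn0.
rewrite leqNgt; apply/negP => Ce; apply: NI; split=> //.
exists (incv z e); rewrite ffunE eqxx addn1; do 3!split=> //.
by move=> e2 /negbTE e2e; rewrite ffunE e2e addn0.
Qed.

Lemma choice_incv2_uninteresting z a d :
  acceptable z -> a != d -> incident a -> incident d ->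
  z a < b a -> z d < b d -> ~ interesting z a -> ~ interesting z d ->
  C v (incv (incv z a) d) = z.
Proof.
move=> acc ad va vd za zd NIa NId; have [Bz Cz] := acc.
have Ba := inB_incv Bz va za; have Bd := inB_incv Bz vd zd.
have Bu := inB_incv2 Bz ad va vd za zd.
have le_a : vle (incv z a) (incv (incv z a) d) by move=> e; rewrite !ffunE; lia.
have le_d : vle (incv z d) (incv (incv z a) d) by move=> e; rewrite !ffunE; lia.
have le_z : vle z (incv (incv z a) d) by move=> e; rewrite !ffunE; lia.
have := choice_substitutable Bu Ba le_a; rewrite (choice_incv_uninteresting acc va za NIa).
have := choice_substitutable Bu Bd le_d; rewrite (choice_incv_uninteresting acc vd zd NId).
move=> sub_d sub_a; rewrite -[RHS]Cz; apply: esym; apply: choice_consistent => // e.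
move: (choice_le Bu e) (sub_a e) (sub_d e); rewrite !ffunE.
case: (eqVneq e a) => [->|_]; first by rewrite (negbTE ad) /=; lia.
by case: (eqVneq e d) => [->|_] /=; lia.
Qed.

Section Exchange.
Variables (y : vec E) (a c d : E).
Hypotheses (ad : a != d) (va : incident a) (vd : incident d).
Hypothesis acc_c : acceptable (incv y c).
Hypotheses (ya : incv y c a < b a) (yd : incv y c d < b d).
Hypotheses (NIa : ~ interesting (incv y c) a) (NId : ~ interesting (incv y c) d).
Hypothesis Id : interesting (incv y a) d.

Let u := incv (incv (incv y c) a) d.

Let inB_u : inB u.
Proof. by case: acc_c => Bc _; apply: inB_incv2. Qed.

Let le_u : vle (incv (incv y d) a) u.
Proof. by move=> e; rewrite !ffunE; lia. Qed.

Let inB_v : inB (incv (incv y d) a).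
Proof. exact: inB_le inB_u le_u. Qed.

Lemma choice_exchange : C v (incv (incv y d) a) = incv y d.
Proof.
have Cu : C v u = incv y c by apply: choice_incv2_uninteresting.
case: Id => _ [y' [By' [y'd [y'_eq Cy'd]]]].
have da : (d == a) = false by rewrite eq_sym (negbTE ad).
have le_y' : vle (incv (incv y d) a) y'.
  move=> e; case: (eqVneq e d) => [->|ed].
    by move: y'd; rewrite !ffunE eqxx da /=; lia.
  by rewrite y'_eq // !ffunE (negbTE ed) addn0.
have lower : vle (incv y d) (C v (incv (incv y d) a)).
  move=> e; move: (choice_substitutable inB_u inB_v le_u e)
    (choice_substitutable By' inB_v le_y' e) Cy'd; rewrite Cu !ffunE.
  by case: (eqVneq e d) => [->|_]; rewrite ?da /=; lia.
have upper := choice_le inB_v.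
case: (between_incv lower upper) => // Cv.
(* |C u| = |y| + 1 < |y + 1^d + 1^a| although u dominates y + 1^d + 1^a *)
have := choice_size_mono inB_u inB_v le_u.
by rewrite Cu Cv !vsize_incv ltnn.
Qed.

Lemma prec_exchange :
  C v (incv y a) = incv y a -> prec ew ef b C v (incv y a) (incv y d).
Proof.
move=> Ca.
have acc_a : acceptable (incv y a).
  by split=> //; apply: inB_le inB_u _ => e; rewrite !ffunE; lia.
have le_d : vle (incv y d) (incv (incv y d) a) by move=> e; rewrite !ffunE; lia.
have Bd := inB_le inB_v le_d.
have acc_d : acceptable (incv y d).
  split=> //; rewrite -[RHS]choice_exchange.
  by apply: choice_consistent; rewrite ?choice_exchange.
split=> //; split=> //; split.
  by move/ffunP/(_ a); rewrite !ffunE eqxx (negbTE ad); lia.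
rewrite -[RHS]choice_exchange; congr (C v _); apply/ffunP => e; rewrite !ffunE.
by case: (eqVneq e a) => [->|_]; rewrite ?(negbTE ad) /=; lia.
Qed.

End Exchange.

End Choice.

Section GMatching.
Variables (W F E : finType) (ew : E -> W) (ef : E -> F) (b : E -> nat).
Variable C : vertex W F -> vec E -> vec E.

Lemma interesting_lt_b v z e : interesting ew ef b C v z e -> z e < b e.
Proof. by case=> _ [z' [Bz' [lt_e _]]]; apply: leq_trans lt_e (Bz' e).1. Qed.

Lemma restr_incident v x e : incident ew ef v e -> restr ew ef v x e = x e.
Proof. by rewrite ffunE => ->. Qed.

Lemma UFplus_lt_b x e : UFplus ew ef b C x e -> x e < b e.
Proof. by move/interesting_lt_b; rewrite restr_incident //=. Qed.

Lemma UFplus_uninteresting x e :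
  stable ew ef b C x -> UFplus ew ef b C x e ->
  ~ interesting ew ef b C (inl (ew e)) (restr ew ef (inl (ew e)) x) e.
Proof. by case=> _ nblock Ue Ie; apply: (nblock e). Qed.

End GMatching.

Theorem lemma3p3 (W F E : finType) (ew : E -> W) (ef : E -> F) (b : E -> nat)
  (C : vertex W F -> vec E -> vec E)
  (Hsimple : injective (fun e => (ew e, ef e)))
  (HC : forall v, choice_fun ew ef b C v)
  (xmax : vec E) (Hxmax : is_xmax ew ef b C xmax)
  (x : vec E) (Hx : stable ew ef b C x) (Hne : x <> xmax)
  (w : W) (c a d : E)
  (Hleg : legal_pair ew ef b C x w c a)
  (HdU : UFplus ew ef b C x d) (Hdw : ew d = w) (Hda : d <> a)
  (Hdint : interesting ew ef b C (inl w) (swapv (restr ew ef (inl w) x) a c) d) :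
  legal_pair ew ef b C x w c d /\
  prec ew ef b C (inl w) (swapv (restr ew ef (inl w) x) a c)
                         (swapv (restr ew ef (inl w) x) d c).
Proof.
have [[_ x_acc] _] := Hx.
have [cU [cw [aU [aw Ca]]]] := Hleg.
pose X := restr ew ef (inl w) x.
have XE e : ew e = w -> X e = x e by move=> ew_e; rewrite restr_incident //= ew_e.
have Xc : 0 < X c by rewrite XE //; case: cU.
rewrite /legal_pair -/X !(swapv_decv _ Xc) in Ca Hdint *.
have Xy : incv (decv X c) c = X := decvK Xc.
have pr : prec ew ef b C (inl w) (incv (decv X c) a) (incv (decv X c) d).
  apply: (@prec_exchange _ _ _ _ _ _ _ _ (HC _) _ a c d); rewrite ?Xy //.
  - exact/eqP/nesym.
  - by rewrite /= aw.
  - by rewrite /= Hdw.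
  - by rewrite XE //; apply: UFplus_lt_b aU.
  - by rewrite XE //; apply: UFplus_lt_b HdU.
  - by rewrite /X -aw; apply: UFplus_uninteresting.
  - by rewrite /X -Hdw; apply: UFplus_uninteresting.
have [[_ Cd] _] := pr.
by do 5!split=> //.
Qed.
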